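(* Let $\ell$ and $m$ be integers with $2\le\ell\le m$, let $G$ be an abelian group written additively, let $\mathbf{a}=(a_1,\dots,a_m)$ be a sequence of elements of $G$, and let $A$ be the set of distinct terms of $\mathbf{a}$. Assume \[ |\Sigma^{\ell}(\mathbf{a})|<\begin{cases}p(G)-1,&\ell=2,\\ p(G),&\ell\ge3,\end{cases} \] that $\mu_{\mathbf{a}}(a)=\ell$ for some $a\in A$, that $|\{a\in A:\mu_{\mathbf{a}}(a)\ge2\}|\ge2$, and that \[ |\Sigma^{\ell}(\mathbf{a})|=\sum_{a\in A}\mu_{\mathbf{a}}(a)-\ell+1 . \] Then $A$ is an arithmetic progression.
   Context: $p(G)$ is the order of the smallest nontrivial subgroup of $G$, or $\infty$ if none exists. $\Sigma^{\ell}(\mathbf{a})$ is the set of all sums $a_{i_1}+\cdots+a_{i_\ell}$ with $1\le i_1<\cdots<i_\ell\le m$. $\rho_a(\mathbf{a})=|\{i:a_i=a\}|$, $\mu_{\mathbf{a}}(a)=\min(\ell,\rho_a(\mathbf{a}))$. An arithmetic progression is a set $\{c+jd:j\in[0,k-1]\}$ with $d\ne0$. *)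

From mathcomp Require Import all_boot all_order all_algebra.
Set Implicit Arguments. Unset Strict Implicit. Unset Printing Implicit Defensive.
Import GRing.Theory.
Local Open Scope ring_scope.

Definition sigma_set (G : zmodType) (m l : nat) (a : 'I_m -> G) : seq G :=
  undup [seq (\sum_(i in X) a i) | X : {set 'I_m} <- enum [set X : {set 'I_m} | #|X| == l]].

Definition terms (G : zmodType) (m : nat) (a : 'I_m -> G) : seq G :=
  undup (codom a).

Definition rho (G : zmodType) (m : nat) (a : 'I_m -> G) (x : G) : nat :=
  #|[set i | a i == x]|.

Definition mu (G : zmodType) (m l : nat) (a : 'I_m -> G) (x : G) : nat :=
  minn l (rho a x).

Definition finite_nontrivial_subgroup (G : zmodType) (H : seq G) : Prop :=
  [/\ uniq H, 0 \in H, (forall x y, x \in H -> y \in H -> x - y \in H)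
    & (1 < size H)%N].

Definition is_AP (G : zmodType) (A : seq G) : Prop :=
  exists (c d : G) (k : nat), d != 0 /\
    forall x, x \in A <-> exists2 j : nat, (j < k)%N & x = c + d *+ j.

From mathcomp Require Import all_boot all_order all_algebra.
From mathcomp Require Import finmap zify.
Import GRing.Theory.
Set Implicit Arguments. Unset Strict Implicit. Unset Printing Implicit Defensive.
Local Open Scope fset_scope.
Local Open Scope ring_scope.

(* Let A_k = {x : mu(x) > k} for k < l, so that A_0 = A and sum_k |A_k| = sum_x mu(x).
   Picking one element in each A_k uses every value x at most mu(x) <= rho_x(a) times, so
   A_(l-1) + ... + A_1 + A_0 lies in Sigma^l(a).  Below p(G) the Cauchy-Davenport theorem
   makes each of the l - 1 additions grow the size by at least |A_k| - 1, and the hypothesis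
   says that |Sigma^l(a)| is exactly this lower bound; in particular
   |A_0 + A_1| = |A_0| + |A_1| - 1 with |A_1| >= 2, and Vosper's theorem makes A_0 an
   arithmetic progression.  Vosper needs |A_0 + A_1| < p(G) - 1: for l = 2 this is the
   hypothesis, for l >= 3 it comes from a third level with two elements, obtained if
   necessary by moving an element of multiplicity 2 from A_1 to A_2.
   Both additive theorems are proved by induction on |Y| with Dyson's e-transform; the
   degenerate cases produce a set X with X + g = X for some g != 0, hence a subgroup of
   order at most |X|. *)

Lemma cardfs_gt1_elems (K : choiceType) (A : {fset K}) :
  (1 < #|` A|)%N -> exists y y', [/\ y \in A, y' \in A & y' != y].
Proof.
move=> A2; have /fset0Pn[y yA] : A != fset0 by rewrite -cardfs_gt0 ltnW.
have /fset0Pn[y' /fsetD1P[y'y y'A]] : A `\ y != fset0.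
  by rewrite -cardfs_gt0; move: A2; rewrite (cardfsD1 y) yA.
by exists y, y'.
Qed.

Lemma cardfs2_elems (K : choiceType) (A : {fset K}) :
  #|` A| = 2%N -> exists y y', y' != y /\ A = [fset y; y'].
Proof.
move=> A2; have [|y [y' [yA y'A y'y]]] := cardfs_gt1_elems (A := A); first by rewrite A2.
exists y, y'; split => //; apply/eqP; rewrite eq_sym eqEfcard cardfs2 eq_sym y'y A2.
by rewrite fsubUset !fsub1set yA y'A.
Qed.

Section SmallSubgroups.
Variable G : zmodType.

(* [pG_gt G N] states N < p(G). *)
Definition pG_gt (N : nat) : Prop :=
  forall H : seq G, finite_nontrivial_subgroup H -> (N < size H)%N.

Lemma pG_gtW N M : pG_gt N -> (M <= N)%N -> pG_gt M.
Proof. by move=> hN MN H /hN; apply: leq_ltn_trans. Qed.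

Lemma mulrn_modn (g : G) n t : g *+ n = 0 -> g *+ t = g *+ (t %% n).
Proof. by move=> gn; rewrite {1}(divn_eq t n) mulrnDr mulnC mulrnA gn mul0rn add0r. Qed.

(* The multiples [g *+ i], [i < n], form a subgroup whenever [g *+ n = 0], even if n is
   not the order of g. *)
Lemma torsion_subgroup (g : G) n : g != 0 -> (0 < n)%N -> g *+ n = 0 ->
  exists2 H : seq G, finite_nontrivial_subgroup H & (size H <= n)%N.
Proof.
move=> g0 n0 gn; set H := undup [seq g *+ i | i <- iota 0 n].
have memH i : g *+ i \in H.
  by rewrite mem_undup (mulrn_modn i gn); apply: map_f; rewrite mem_iota ltn_pmod.
exists H; last by rewrite (leq_trans (size_undup _)) // size_map size_iota.
split; rewrite ?undup_uniq ?(memH 0%N) //.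
- move=> x y; rewrite !mem_undup => /mapP[i _ ->] /mapP[j]; rewrite mem_iota => /andP[_ jn] ->.
  have -> : - (g *+ j) = g *+ (n - j) by rewrite mulrnBr ?gn ?sub0r // ltnW.
  by rewrite -mulrnDr -mem_undup memH.
- apply: (@uniq_leq_size _ [:: 0; g]); first by rewrite /= inE eq_sym g0.
  by move=> x; rewrite !inE => /orP[]/eqP->; [apply: (memH 0%N) | apply: (memH 1%N)].
Qed.

Lemma orbit_leaves (X : {fset G}) x0 g : g != 0 -> pG_gt #|` X| ->
  exists2 i, (i <= #|` X|)%N & x0 + g *+ i \notin X.
Proof.
move=> g0 hX.
have /allPn[i] : ~~ all (fun i => x0 + g *+ i \in X) (iota 0 #|` X|.+1).
  apply/allP => inX.
  have /(uniqPn 0)[i [j [ij]]] : ~~ uniq [seq x0 + g *+ i | i <- iota 0 #|` X|.+1].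
    apply/negP => U; suff: (#|` X|.+1 <= #|` X|)%N by rewrite ltnn.
    rewrite -{1}(size_iota 0 #|` X|.+1) -(size_map (fun i => x0 + g *+ i)).
    by apply: uniq_leq_size U _ => _ /mapP[i iX ->]; apply: inX.
  rewrite size_map size_iota => jX.
  rewrite !(nth_map 0%N) ?size_iota ?(ltn_trans ij) // !nth_iota ?(ltn_trans ij) //.
  rewrite !add0n => /addrI gij.
  have gji : g *+ (j - i) = 0 by rewrite mulrnBr ?gij ?subrr // ltnW.
  have ji0 : (0 < j - i)%N by rewrite subn_gt0.
  by have [H /hX] := torsion_subgroup g0 ji0 gji; lia.
by rewrite mem_iota ltnS => /andP[_ iX] iout; exists i.
Qed.

Lemma orbit_exit (X : {fset G}) x0 g : g != 0 -> pG_gt #|` X| ->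
  exists i, [/\ (i <= #|` X|)%N, x0 + g *+ i \notin X &
                forall j, (j < i)%N -> x0 + g *+ j \in X].
Proof.
move=> g0 hX; have [i0 i0X i0out] := orbit_leaves x0 g0 hX.
have exit : exists i, (i <= #|` X|)%N && (x0 + g *+ i \notin X) by exists i0; rewrite i0X.
have [i /andP[iX iout] imin] := ex_minnP exit.
exists i; split => // j ji; apply/negPn/negP => jout.
by have := imin j; rewrite jout andbT => /(_ (leq_trans (ltnW ji) iX)); lia.
Qed.

Lemma not_shift_closed (X : {fset G}) x0 g : x0 \in X -> g != 0 -> pG_gt #|` X| ->
  ~ (forall x, x \in X -> x + g \in X).
Proof.
move=> x0X g0 hX closedX; have [i _ /negP[]] := orbit_leaves x0 g0 hX.
by elim: i => [|i IH]; rewrite ?mulr0n ?addr0 // mulrSr addrA closedX.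
Qed.

End SmallSubgroups.

Section Sumsets.
Variable G : zmodType.
Implicit Types X Y : {fset G}.

Definition sumset X Y : {fset G} := [fset x + y | x in X, y in Y].
Definition shift X (c : G) : {fset G} := [fset x + c | x in X].

Lemma sumsetP X Y z :
  reflect (exists2 x, x \in X & exists2 y, y \in Y & z = x + y) (z \in sumset X Y).
Proof. exact: imfset2P. Qed.

Lemma mem_sumset X Y x y : x \in X -> y \in Y -> x + y \in sumset X Y.
Proof. by move=> xX yY; apply/sumsetP; exists x => //; exists y. Qed.

Lemma sumsetS X Y X' Y' : X `<=` X' -> Y `<=` Y' -> sumset X Y `<=` sumset X' Y'.
Proof.
move=> /fsubsetP sX /fsubsetP sY; apply/fsubsetP => _ /sumsetP[x xX [y yY ->]].
by rewrite mem_sumset ?sX ?sY.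
Qed.

Lemma sumsetC X Y : sumset X Y = sumset Y X.
Proof.
by apply/fsetP => z; apply/sumsetP/sumsetP => -[x xX [y yY ->]];
  exists y => //; exists x => //; rewrite addrC.
Qed.

Lemma mem_shift X c z : (z \in shift X c) = (z - c \in X).
Proof.
apply/imfsetP/idP => [[x xX ->]|zX]; first by rewrite addrK.
by exists (z - c) => //; rewrite subrK.
Qed.

Lemma card_shift X c : #|` shift X c| = #|` X|.
Proof. by rewrite card_imfset //= => x y /addIr. Qed.

Lemma sumset1 X c : sumset X [fset c] = shift X c.
Proof.
apply/fsetP => z; rewrite mem_shift; apply/sumsetP/idP => [[x xX [_ /fset1P -> ->]]|zX].
  by rewrite addrK.
by exists (z - c) => //; exists c; rewrite ?fset11 ?subrK.
Qed.

Lemma sumset0 X : sumset X [fset 0] = X.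
Proof. by apply/fsetP => z; rewrite sumset1 mem_shift subr0. Qed.

Lemma leq_card_sumsetl X Y y : y \in Y -> (#|` X| <= #|` sumset X Y|)%N.
Proof.
move=> yY; rewrite -(card_shift X y) -sumset1.
by apply/fsubset_leq_card/sumsetS; rewrite ?fsub1set.
Qed.

Lemma leq_card_sumsetr X Y x : x \in X -> (#|` Y| <= #|` sumset X Y|)%N.
Proof. by rewrite sumsetC; apply: leq_card_sumsetl. Qed.

Lemma leq_card_sumset_disjoint X Y Z c : c \in Y -> Z `<=` sumset X Y ->
  [disjoint shift X c & Z] -> (#|` X| + #|` Z| <= #|` sumset X Y|)%N.
Proof.
move=> cY ZXY disj; rewrite -(card_shift X c).
have := cardfsUI (shift X c) Z; move: disj; rewrite -fsetI_eq0 => /eqP ->.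
rewrite cardfs0 addn0 => <-; apply: fsubset_leq_card.
by rewrite fsubUset ZXY andbT -sumset1 sumsetS ?fsub1set ?fsubset_refl.
Qed.

Definition dysonl X Y e := X `|` shift Y e.
Definition dysonr X Y e := [fset y in Y | y + e \in X].

Lemma mem_dysonr X Y e y : (y \in dysonr X Y e) = (y \in Y) && (y + e \in X).
Proof. by rewrite !inE. Qed.

Lemma dysonr_sub X Y e : dysonr X Y e `<=` Y.
Proof. exact: fset_sub. Qed.

Lemma sumset_dyson X Y e : sumset (dysonl X Y e) (dysonr X Y e) `<=` sumset X Y.
Proof.
apply/fsubsetP => _ /sumsetP[x xXY [y + ->]]; rewrite mem_dysonr => /andP[yY yeX].
case/fsetUP: xXY => [xX|]; first exact: mem_sumset.
rewrite mem_shift => xeY; have -> : x + y = (y + e) + (x - e).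
  by rewrite addrACA subrr addr0 addrC.
exact: mem_sumset.
Qed.

Lemma card_dyson X Y e : (#|` dysonl X Y e| + #|` dysonr X Y e| = #|` X| + #|` Y|)%N.
Proof.
have -> : #|` dysonr X Y e| = #|` X `&` shift Y e|.
  rewrite -(card_shift (dysonr X Y e) e); congr #|` _|; apply/fsetP => z.
  by rewrite in_fsetI !mem_shift mem_dysonr subrK andbC.
by rewrite cardfsUI card_shift.
Qed.

Theorem cauchy_davenport X Y : X != fset0 -> Y != fset0 -> pG_gt G #|` sumset X Y| ->
  (#|` X| + #|` Y| <= #|` sumset X Y| + 1)%N.
Proof.
have [n] := ubnP #|` Y|; elim: n X Y => // n IH X Y Yn X0 Y0 hXY.
have [Y1|Y2] := leqP #|` Y| 1.
  have /cardfs1P[y ->] : #|` Y| == 1%N by rewrite eqn_leq Y1 cardfs_gt0.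
  by rewrite sumset1 card_shift cardfs1.
have [/allP stable|/allPn[x xX /allPn[y yY dysonY]]] :=
  boolP (all (fun x => all (fun y => dysonr X Y (x - y) == Y) Y) X).
  have [y [y' [yY y'Y y'y]]] := cardfs_gt1_elems Y2; have /fset0Pn[x0 x0X] := X0.
  have [] := @not_shift_closed _ X x0 (y' - y) x0X; first by rewrite subr_eq0.
    by apply: pG_gtW hXY _; apply: leq_card_sumsetl yY.
  move=> x xX; move/allP: (stable x xX) => /(_ y yY)/eqP dysonY.
  by move: y'Y; rewrite -dysonY mem_dysonr addrCA => /andP[].
pose e := x - y.
have y_Y' : y \in dysonr X Y e by rewrite mem_dysonr yY addrC subrK.
have Y'n : (#|` dysonr X Y e| < n)%N.
  apply: leq_trans (ltnSE Yn); apply: fproper_ltn_card.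
  by rewrite fproperEneq dysonr_sub andbT; exact: dysonY.
have X'0 : dysonl X Y e != fset0 by apply/fset0Pn; exists x; rewrite in_fsetU xX.
have Y'0 : dysonr X Y e != fset0 by apply/fset0Pn; exists y.
have sub := fsubset_leq_card (sumset_dyson X Y e).
have := IH _ _ Y'n X'0 Y'0 (pG_gtW hXY sub).
by have := card_dyson X Y e; lia.
Qed.

End Sumsets.

Section Progressions.
Variable G : zmodType.
Implicit Types X Y : {fset G}.

Definition prog (u d : G) (k : nat) : {fset G} :=
  [fset x in [seq u + d *+ j | j <- iota 0 k]].

Definition is_prog X : Prop := exists u d, d != 0 /\ X = prog u d #|` X|.

Lemma progP u d k z : reflect (exists2 j, (j < k)%N & z = u + d *+ j) (z \in prog u d k).
Proof.
rewrite inE; apply: (iffP mapP) => [[j]|[j jk ->]]; last by exists j; rewrite ?mem_iota.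
by rewrite mem_iota => jk ->; exists j.
Qed.

Lemma card_prog u d k : (#|` prog u d k| <= k)%N.
Proof. by rewrite card_fseq (leq_trans (size_undup _)) // size_map size_iota. Qed.

Lemma prog_pair (y y' : G) : [fset y; y'] = prog y (y' - y) 2.
Proof.
apply/fsetP => z; rewrite in_fset2; apply/orP/progP => [[]/eqP->|[[|[|//]] _ ->]].
- by exists 0%N; rewrite ?mulr0n ?addr0.
- by exists 1%N; rewrite // addrC subrK.
- by left; rewrite mulr0n addr0.
- by right; rewrite addrC subrK.
Qed.

Lemma sumset_prog u v d i j : (0 < i)%N -> (0 < j)%N ->
  sumset (prog u d i) (prog v d j) = prog (u + v) d (i + j).-1.
Proof.
move=> i0 j0; apply/fsetP => z; apply/sumsetP/progP.
  move=> [_ /progP[s si ->] [_ /progP[t tj ->] ->]].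
  by exists (s + t); [lia | rewrite mulrnDr addrACA].
move=> [t tij ->]; have [ti|it] := ltnP t i.
  exists (u + d *+ t); first by apply/progP; exists t.
  by exists v; [apply/progP; exists 0%N; rewrite ?mulr0n ?addr0 | rewrite addrAC].
exists (u + d *+ i.-1); first by apply/progP; exists i.-1; rewrite ?prednK.
exists (v + d *+ (t - i.-1)%N); first by apply/progP; exists (t - i.-1)%N => //; lia.
by rewrite addrACA -mulrnDr subnKC //; lia.
Qed.

Lemma prog_of_card_shift X d : d != 0 -> X != fset0 -> pG_gt G #|` X| ->
  (#|` X `|` shift X d| <= #|` X| + 1)%N -> exists u, X = prog u d #|` X|.
Proof.
move=> d0 X0 hX cXd; pose D := X `\` shift X d.
have nd : - d != 0 by rewrite oppr_eq0.
have D0 : D != fset0.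
  apply/negP => /eqP D0; have /fset0Pn[x0 x0X] := X0.
  apply: (not_shift_closed x0X nd hX) => x xX; apply/negPn/negP => xdX.
  suff : x \in D by rewrite D0 in_fset0.
  by rewrite in_fsetD xX mem_shift xdX.
have /cardfs1P[u Du] : #|` D| == 1%N.
  rewrite eqn_leq cardfs_gt0 D0 andbT.
  by have := cardfsUI X (shift X d); have := cardfsID (shift X d) X; rewrite /D card_shift; lia.
exists u; apply/eqP; rewrite eqEfcard card_prog andbT; apply/fsubsetP => x xX.
have [i [iX out inX]] := orbit_exit x nd hX.
have i0 : (0 < i)%N by case: i out {iX inX} => //; rewrite mulr0n addr0 xX.
have : x + (- d) *+ i.-1 \in D.
  rewrite in_fsetD mem_shift -addrA -mulrSr prednK // out /=.
  by apply: inX; rewrite prednK.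
rewrite Du => /fset1P xiE; apply/progP; exists i.-1; first by lia.
by rewrite -xiE mulNrn subrK.
Qed.

Lemma prog_of_sumset_pair X y y' : X != fset0 -> y' != y ->
  pG_gt G #|` sumset X [fset y; y']| -> (#|` sumset X [fset y; y']| <= #|` X| + 1)%N ->
  exists u, X = prog u (y' - y) #|` X|.
Proof.
move=> X0 y'y hXY cXY.
have shiftE : X `|` shift X (y' - y) = shift (sumset X [fset y; y']) (- y).
  apply/fsetP => z; rewrite in_fsetU !mem_shift opprK; apply/orP/sumsetP.
    case=> [zX|zX]; first by exists z => //; exists y; rewrite ?fset21.
    by exists (z - (y' - y)) => //; exists y'; rewrite ?fset22 // opprB -addrA subrK.
  case=> x xX [w]; rewrite in_fset2 => /orP[]/eqP-> zE.
    by left; move/addIr: zE => ->.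
  by right; rewrite opprB addrA zE addrK.
apply: prog_of_card_shift => //; first by rewrite subr_eq0.
  by apply: pG_gtW hXY _; apply: leq_card_sumsetl (fset21 y y').
by rewrite shiftE card_shift.
Qed.

Lemma prog_of_sumset_sub_prog X Y u d k : d != 0 -> X != fset0 -> Y != fset0 ->
  pG_gt G k.+1 -> sumset X Y `<=` prog u d k -> (#|` X| + #|` Y| = k.+1)%N ->
  exists v, X = prog v d #|` X|.
Proof.
move=> d0 X0 Y0 hk /fsubsetP XY_prog cXY.
pose W := X `|` shift X d.
have WY_prog : sumset W Y `<=` prog u d k.+1.
  apply/fsubsetP => _ /sumsetP[w wW [y yY ->]]; case/fsetUP: wW => [wX|].
    have /progP[j jk ->] := XY_prog _ (mem_sumset wX yY).
    by apply/progP; exists j => //; lia.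
  rewrite mem_shift => wdX; have /progP[j jk wyE] := XY_prog _ (mem_sumset wdX yY).
  by apply/progP; exists j.+1; [lia | rewrite mulrSr addrA -wyE addrAC subrK].
have W0 : W != fset0 by apply/fset0Pn; have /fset0Pn[x xX] := X0; exists x; rewrite in_fsetU xX.
have cWY := leq_trans (fsubset_leq_card WY_prog) (card_prog u d k.+1).
have := cauchy_davenport W0 Y0 (pG_gtW hk cWY).
have := Y0; rewrite -cardfs_gt0 => Y1 cW.
by apply: prog_of_card_shift => //; [apply: pG_gtW hk _ | rewrite -/W]; lia.
Qed.

(* The case of Vosper's induction where no e-transform shrinks Y to a proper subset with at
   least two elements. *)
Lemma card_sumset_rigid X Y y1 : y1 \in Y -> (1 < #|` X|)%N -> (2 < #|` Y|)%N ->
  pG_gt G #|` sumset X Y| ->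
  (forall x, x \in X -> (#|` dysonr X Y (x - y1)| <= 1)%N || (dysonr X Y (x - y1) == Y)) ->
  (#|` X| + #|` Y| <= #|` sumset X Y|)%N.
Proof.
move=> y1Y X2 Y3 hXY rigid.
pose XF := [fset x in X | dysonr X Y (x - y1) == Y]; pose XL := X `\` XF.
have cX : (#|` XF| + #|` XL| = #|` X|)%N.
  have sXF : XF `<=` X by apply: fset_sub.
  by rewrite /XL cardfsDS //; have := fsubset_leq_card sXF; lia.
have XFY : sumset XF Y `<=` shift X y1.
  apply/fsubsetP => _ /sumsetP[x + [y yY ->]]; rewrite !inE /= => /andP[xX /eqP XFx].
  by rewrite mem_shift; move: yY; rewrite -XFx mem_dysonr addrCA addrA => /andP[].
have disj : [disjoint shift X y1 & sumset XL (Y `\ y1)].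
  apply/fdisjointP => z; rewrite mem_shift => zX; apply/negP.
  case/sumsetP => x + [y /fsetD1P[yy1 yY] zE].
  rewrite in_fsetD !inE /= => /andP[notF xX]; rewrite xX /= in notF.
  have : [fset y; y1] `<=` dysonr X Y (x - y1).
    rewrite fsubUset !fsub1set !mem_dysonr yY y1Y [y1 + _]addrC subrK xX andbT.
    by rewrite addrCA addrA -zE zX.
  move/fsubset_leq_card; rewrite cardfs2 yy1.
  by have := rigid x xX; rewrite (negbTE notF) orbF; lia.
have cXL : (#|` X| + #|` sumset XL (Y `\ y1)| <= #|` sumset X Y|)%N.
  apply: leq_card_sumset_disjoint y1Y _ disj.
  by rewrite sumsetS ?fsubsetDl ?fsubD1set.
have cY1 : #|` Y `\ y1| = #|` Y|.-1 by rewrite (cardfsD1 y1 Y) y1Y.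
have Y0 : Y != fset0 by apply/fset0Pn; exists y1.
have cXXY := leq_card_sumsetl X y1Y.
have cF : XF != fset0 -> (#|` XF| + #|` Y| <= #|` X| + 1)%N.
  move=> F0; have := fsubset_leq_card XFY; rewrite card_shift => cFY.
  by have := cauchy_davenport F0 Y0 (pG_gtW hXY (leq_trans cFY cXXY)); lia.
have cL : XL != fset0 -> (#|` XL| + #|` Y| <= #|` sumset XL (Y `\ y1)| + 2)%N.
  move=> L0; have Y10 : Y `\ y1 != fset0 by rewrite -cardfs_gt0 cY1; lia.
  have hL : pG_gt G #|` sumset XL (Y `\ y1)| by apply: pG_gtW hXY _; lia.
  by have := cauchy_davenport L0 Y10 hL; lia.
by have [F0|/cF ?] := eqVneq XF fset0; have [L0|/cL ?] := eqVneq XL fset0;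
  move: cX; rewrite ?F0 ?L0 ?cardfs0; lia.
Qed.

Lemma vosper_sumset X Y : (1 < #|` X|)%N -> (1 < #|` Y|)%N -> pG_gt G #|` sumset X Y| ->
  (#|` sumset X Y| + 1 = #|` X| + #|` Y|)%N -> is_prog (sumset X Y).
Proof.
have [n] := ubnP #|` Y|; elim: n X Y => // n IH X Y Yn X2 Y2 hXY tight.
have X0 : X != fset0 by rewrite -cardfs_gt0 ltnW.
have [Y2'|Y3] := leqP #|` Y| 2.
  have /cardfs2_elems[y [y' [y'y YE]]] : #|` Y| = 2%N by lia.
  have cXY : #|` sumset X Y| = (#|` X| + 1)%N by lia.
  rewrite YE in hXY cXY *.
  have [u XE] := prog_of_sumset_pair X0 y'y hXY (eq_leq cXY).
  exists (u + y), (y' - y); split; first by rewrite subr_eq0.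
  have X1 : (0 < #|` X|)%N by lia.
  by rewrite cXY {1}XE prog_pair sumset_prog // addnS.
have [/allP rigid|/allPn[x xX /allPn[y yY /norP[Y'big Y'Y]]]] := boolP (all (fun x =>
    all (fun y => (#|` dysonr X Y (x - y)| <= 1)%N || (dysonr X Y (x - y) == Y)) Y) X).
  have /fset0Pn[y1 y1Y] : Y != fset0 by rewrite -cardfs_gt0 ltnW.
  by have := card_sumset_rigid y1Y X2 Y3 hXY (fun x xX => allP (rigid x xX) y1 y1Y); lia.
pose e := x - y.
have Y'2 : (1 < #|` dysonr X Y e|)%N by rewrite ltnNge.
have Y'n : (#|` dysonr X Y e| < n)%N.
  apply: leq_trans (ltnSE Yn); apply: fproper_ltn_card.
  by rewrite fproperEneq dysonr_sub andbT; exact: Y'Y.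
have X'0 : dysonl X Y e != fset0 by apply/fset0Pn; exists x; rewrite in_fsetU xX.
have Y'0 : dysonr X Y e != fset0 by rewrite -cardfs_gt0 ltnW.
have sub := sumset_dyson X Y e.
have := cauchy_davenport X'0 Y'0 (pG_gtW hXY (fsubset_leq_card sub)).
have := card_dyson X Y e; have := fsubset_leq_card (fsubsetUl X (shift Y e)).
rewrite -/(dysonl X Y e) => cX' cd cdXY'.
have eqXY : sumset (dysonl X Y e) (dysonr X Y e) = sumset X Y.
  have cXY : (#|` sumset X Y| <= #|` sumset (dysonl X Y e) (dysonr X Y e)|)%N by lia.
  by apply/eqP; rewrite eqEfcard sub.
by rewrite -eqXY; apply: IH; rewrite ?eqXY //; lia.
Qed.

Theorem vosper X Y : (1 < #|` X|)%N -> (1 < #|` Y|)%N -> pG_gt G (#|` sumset X Y|).+1 ->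
  (#|` sumset X Y| + 1 = #|` X| + #|` Y|)%N -> is_prog X.
Proof.
move=> X2 Y2 hXY tight.
have [u [d [d0 XYE]]] := vosper_sumset X2 Y2 (pG_gtW hXY (leqnSn _)) tight.
have X0 : X != fset0 by rewrite -cardfs_gt0 ltnW.
have Y0 : Y != fset0 by rewrite -cardfs_gt0 ltnW.
have XY_prog : sumset X Y `<=` prog u d #|` sumset X Y| by rewrite -XYE fsubset_refl.
have [|v XE] := prog_of_sumset_sub_prog d0 X0 Y0 hXY XY_prog; first by lia.
by exists v, d.
Qed.

End Progressions.

Lemma is_AP_prog (G : zmodType) (A : seq G) : is_prog [fset x in A] -> is_AP A.
Proof.
move=> [u [d [d0 AE]]]; exists u, d, #|` [fset x in A]|; split => // x.
have -> : (x \in A) = (x \in prog u d #|` [fset x in A]|) by rewrite -AE inE.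
by split => /progP.
Qed.

Lemma size_le_sum_card (K : choiceType) (R : seq {fset K}) :
  (forall B, B \in R -> B != fset0) -> (size R <= \sum_(B <- R) #|` B|)%N.
Proof.
move=> R0; rewrite -sum1_size big_seq [X in (_ <= X)%N]big_seq.
by apply: leq_sum => B /R0; rewrite cardfs_gt0.
Qed.

Section Families.
Variable G : zmodType.

Lemma sumset_neq0 (X Y : {fset G}) : X != fset0 -> Y != fset0 -> sumset X Y != fset0.
Proof.
by move=> /fset0Pn[x xX] /fset0Pn[y yY]; apply/fset0Pn; exists (x + y); apply: mem_sumset.
Qed.

Lemma foldr_sumset_neq0 (T : {fset G}) (R : seq {fset G}) : T != fset0 ->
  (forall B, B \in R -> B != fset0) -> foldr (@sumset G) T R != fset0.
Proof.
move=> T0; elim: R => //= B R IH R0.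
apply: sumset_neq0; first by rewrite R0 ?mem_head.
by apply: IH => C CR; rewrite R0 // inE CR orbT.
Qed.

Lemma card_foldr_sumset (T : {fset G}) (R : seq {fset G}) :
  T != fset0 -> (forall B, B \in R -> B != fset0) -> pG_gt G #|` foldr (@sumset G) T R| ->
  (\sum_(B <- R) #|` B| + #|` T| <= #|` foldr (@sumset G) T R| + size R)%N.
Proof.
move=> T0; elim: R => [|B R IH] R0 hR; first by rewrite big_nil addn0.
have R0' C : C \in R -> C != fset0 by move=> CR; rewrite R0 // inE CR orbT.
have B0 : B != fset0 by rewrite R0 ?mem_head.
have U0 := foldr_sumset_neq0 T0 R0'.
have /fset0Pn[b bB] := B0.
have cU := leq_card_sumsetr (foldr (@sumset G) T R) bB.
have := IH R0' (pG_gtW hR cU); have := cauchy_davenport B0 U0 hR.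
have -> : foldr (@sumset G) T (B :: R) = sumset B (foldr (@sumset G) T R) by [].
have -> : size (B :: R) = (size R).+1 by [].
by rewrite big_cons; lia.
Qed.

Definition mult (F : seq {fset G}) (v : G) : nat := count (fun B : {fset G} => v \in B) F.

Variables (m : nat) (a : 'I_m -> G).

Lemma foldr_sumset_indexed F s : (forall v, (mult F v <= rho a v)%N) ->
  s \in foldr (@sumset G) [fset 0] F ->
  exists X : {set 'I_m}, [/\ #|X| = size F, \sum_(i in X) a i = s &
    forall v, (#|X :&: [set i | a i == v]| <= mult F v)%N].
Proof.
elim: F s => [|B F IH] s multF /=.
  move=> /fset1P ->; exists set0; split; rewrite ?cards0 ?big_set0 // => v.
  by rewrite set0I cards0.
case/sumsetP => b bB [t tF ->].
have multF' v : (mult F v <= rho a v)%N by apply: leq_trans (multF v); apply: leq_addl.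
have [X [cX sX multX]] := IH t multF' tF.
have /subsetPn[i] : ~~ ([set i | a i == b] \subset X).
  apply/negP => /setIidPr XSb; have := multX b; rewrite XSb => rho_le.
  by have := leq_trans (multF b) rho_le; rewrite /mult /= bB add1n ltnn.
rewrite inE => /eqP ai iX; exists (i |: X); split.
- by rewrite cardsU1 iX cX.
- by rewrite big_setU1 //= ai sX.
move=> v; rewrite /mult /=; have [->|vb] := eqVneq v b.
  rewrite bB; apply: leq_trans (_ : #|i |: (X :&: [set j | a j == b])| <= _)%N.
    apply/subset_leq_card/subsetP => j; rewrite !inE.
    by case/andP => /orP[-> //|jX ajb]; rewrite jX ajb andbT orbT.
  by rewrite cardsU1 leq_add ?leq_b1 ?multX.
have -> : (i |: X) :&: [set j | a j == v] = X :&: [set j | a j == v].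
  apply/setP => j; rewrite !inE; have [->|_] := eqVneq j i; last by rewrite orFb.
  by rewrite ai eq_sym (negbTE vb) !andbF.
exact: leq_trans (multX v) (leq_addl _ _).
Qed.

Lemma card_sigma_set l : #|` [fset x in sigma_set l a]| = size (sigma_set l a).
Proof. by rewrite card_fseq undup_id // undup_uniq. Qed.

Lemma foldr_sumset_sub_sigma F : (forall v, (mult F v <= rho a v)%N) ->
  foldr (@sumset G) [fset 0] F `<=` [fset x in sigma_set (size F) a].
Proof.
move=> multF; apply/fsubsetP => s /(foldr_sumset_indexed multF)[X [cX <- _]].
by rewrite inE /sigma_set mem_undup; apply: map_f; rewrite mem_enum inE cX.
Qed.

Definition admissible l (F : seq {fset G}) : Prop :=
  [/\ size F = l, forall B, B \in F -> B != fset0 & forall v, (mult F v <= rho a v)%N].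

Lemma tight_family l R Y A : admissible l (R ++ [:: Y; A]) ->
  pG_gt G (size (sigma_set l a)) ->
  (size (sigma_set l a) + l = \sum_(B <- R ++ [:: Y; A]) #|` B| + 1)%N ->
  [/\ (#|` sumset A Y| + 1 = #|` A| + #|` Y|)%N,
      (#|` sumset A Y| <= size (sigma_set l a))%N &
      (#|` sumset A Y| + \sum_(B <- R) #|` B| <= size (sigma_set l a) + size R)%N].
Proof.
move=> [sF F0 multF] hS sizeS.
have R0 B : B \in R -> B != fset0 by move=> BR; rewrite F0 // mem_cat BR.
have Y0 : Y != fset0 by rewrite F0 // mem_cat !inE eqxx orbT.
have A0 : A != fset0 by rewrite F0 // mem_cat !inE eqxx !orbT.
pose S := size (sigma_set l a); pose U := foldr (@sumset G) (sumset A Y) R.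
have cS : (#|` U| <= S)%N.
  have := fsubset_leq_card (foldr_sumset_sub_sigma multF).
  by rewrite foldr_cat /= sumset0 sumsetC sF card_sigma_set.
have chain : (\sum_(B <- R) #|` B| + #|` sumset A Y| <= #|` U| + size R)%N.
  exact: card_foldr_sumset (sumset_neq0 A0 Y0) R0 (pG_gtW hS cS).
have sR : (size R <= \sum_(B <- R) #|` B|)%N by apply: size_le_sum_card.
have cAY : (#|` sumset A Y| <= S)%N by lia.
have cd : (#|` A| + #|` Y| <= #|` sumset A Y| + 1)%N.
  exact: cauchy_davenport A0 Y0 (pG_gtW hS cAY).
have sumF : (\sum_(B <- R ++ [:: Y; A]) #|` B| = \sum_(B <- R) #|` B| + #|` Y| + #|` A|)%N.
  by rewrite big_cat !big_cons big_nil /= addn0 addnA.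
have sizeR : (size R + 2 = l)%N by rewrite -sF size_cat.
rewrite sumF in sizeS.
by split; lia.
Qed.

Lemma prog_of_tight_family_pair l R Y A : admissible l (R ++ [:: Y; A]) ->
  pG_gt G (size (sigma_set l a)) ->
  (size (sigma_set l a) + l = \sum_(B <- R ++ [:: Y; A]) #|` B| + 1)%N ->
  #|` Y| = 2%N -> is_prog A.
Proof.
move=> adm hS sizeS /cardfs2_elems[y [y' [y'y YE]]].
have [tight cAY _] := tight_family adm hS sizeS.
have [_ F0 _] := adm; have A0 : A != fset0 by rewrite F0 // mem_cat !inE eqxx !orbT.
rewrite YE in tight cAY; rewrite cardfs2 eq_sym y'y in tight.
have [|u AE] := prog_of_sumset_pair A0 y'y (pG_gtW hS cAY); first by lia.
by exists u, (y' - y); rewrite subr_eq0.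
Qed.

Lemma prog_of_tight_family l R Y A : admissible l (R ++ [:: Y; A]) ->
  pG_gt G (size (sigma_set l a)).+1 ->
  (size (sigma_set l a) + l = \sum_(B <- R ++ [:: Y; A]) #|` B| + 1)%N ->
  (1 < #|` Y|)%N -> (1 < #|` A|)%N -> is_prog A.
Proof.
move=> adm hS sizeS Y2 A2.
have [tight cAY _] := tight_family adm (pG_gtW hS (leqnSn _)) sizeS.
by apply: vosper A2 Y2 (pG_gtW hS _) tight; rewrite ltnS.
Qed.

Lemma prog_of_tight_family_slack l R B Y A : admissible l (R ++ [:: B; Y; A]) ->
  pG_gt G (size (sigma_set l a)) ->
  (size (sigma_set l a) + l = \sum_(C <- R ++ [:: B; Y; A]) #|` C| + 1)%N ->
  (1 < #|` B|)%N -> (1 < #|` Y|)%N -> (1 < #|` A|)%N -> is_prog A.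
Proof.
rewrite -[R ++ _]/(R ++ [:: B] ++ [:: Y; A]) catA => adm hS sizeS B2 Y2 A2.
have [tight _ bound] := tight_family adm hS sizeS.
have [_ F0 _] := adm.
have R0 C : C \in R -> C != fset0 by move=> CR; rewrite F0 // !mem_cat CR.
have sR : (size R <= \sum_(C <- R) #|` C|)%N by apply: size_le_sum_card.
have sumRB : (\sum_(C <- R ++ [:: B]) #|` C| = \sum_(C <- R) #|` C| + #|` B|)%N.
  by rewrite big_cat big_seq1.
rewrite sumRB size_cat addn1 in bound.
by apply: vosper A2 Y2 (pG_gtW hS _) tight; lia.
Qed.

Lemma admissible_move l R B Y T r : r \in Y -> r \notin B -> (1 < #|` Y|)%N ->
  admissible l (R ++ [:: B, Y & T]) -> admissible l (R ++ [:: r |` B, Y `\ r & T]).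
Proof.
move=> rY rB Y2 [sF F0 multF]; split.
- by rewrite -sF !size_cat.
- move=> C; rewrite mem_cat !inE => /orP[CR|/or3P[/eqP->|/eqP->|CT]].
  + by rewrite F0 // mem_cat CR.
  + by apply/fset0Pn; exists r; rewrite fset1U1.
  + by rewrite -cardfs_gt0 (cardfsD1 r Y) rY in Y2 *.
  + by rewrite F0 // mem_cat !inE CT !orbT.
- move=> v; apply: leq_trans (multF v); rewrite /mult !count_cat /= in_fset1U in_fsetD1.
  by have [->|vr] := eqVneq v r; rewrite ?rY ?(negbTE rB).
Qed.

Lemma sum_card_move (R : seq {fset G}) B Y T r : r \in Y -> r \notin B ->
  \sum_(C <- R ++ [:: r |` B, Y `\ r & T]) #|` C| = \sum_(C <- R ++ [:: B, Y & T]) #|` C|.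
Proof.
move=> rY rB; rewrite !big_cat !big_cons cardfsU1 rB [#|` Y|](cardfsD1 r Y) rY /=.
by lia.
Qed.

End Families.

Lemma count_ltn_iota n k : count (fun j => (j < n)%N) (iota 0 k) = minn n k.
Proof.
elim: k => [|k IH]; first by rewrite minn0.
by rewrite -addn1 iotaD count_cat IH /= add0n addn0; case: ltnP => ?; lia.
Qed.

Section Levels.
Variables (G : zmodType) (m l : nat) (a : 'I_m -> G).

Definition level k : {fset G} := [fset x in [seq x <- terms a | (k < mu l a x)%N]].

Lemma mem_level k x : (x \in level k) = (x \in terms a) && (k < mu l a x)%N.
Proof. by rewrite inE mem_filter andbC. Qed.

Lemma card_level k : #|` level k| = count (fun x => (k < mu l a x)%N) (terms a).
Proof. by rewrite card_fseq undup_id ?size_filter // filter_uniq // undup_uniq. Qed.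

Lemma level_sub k : level k.+1 `<=` level k.
Proof. by apply/fsubsetP => x; rewrite !mem_level => /andP[-> /ltnW]. Qed.

Lemma level0E : (0 < l)%N -> level 0 = [fset x in terms a].
Proof.
move=> l0; apply/fsetP => x; rewrite mem_level inE; case xA: (x \in terms a) => //=.
move: xA; rewrite /terms mem_undup => /codomP[i ->].
by rewrite /mu /rho leq_min l0 card_gt0; apply/set0Pn; exists i; rewrite inE.
Qed.

Definition levels_from k : seq {fset G} := [seq level j | j <- rev (iota k (l - k))].

Lemma levels_fromS k : (k < l)%N -> levels_from k = levels_from k.+1 ++ [:: level k].
Proof. by move=> kl; rewrite /levels_from -(subnSK kl) /= rev_cons -cats1 map_cat. Qed.

Lemma mult_levels v : (mult (levels_from 0) v <= rho a v)%N.
Proof.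
rewrite /mult /levels_from subn0 count_map count_rev.
apply: (@leq_trans (count (fun j => (j < mu l a v)%N) (iota 0 l))).
  by apply: sub_count => j /=; rewrite mem_level => /andP[].
by rewrite count_ltn_iota (leq_trans (geq_minl _ _)) ?geq_minr.
Qed.

Lemma sum_card_levels :
  (\sum_(B <- levels_from 0) #|` B| = \sum_(x <- terms a) mu l a x)%N.
Proof.
rewrite /levels_from subn0 big_map big_rev.
under eq_bigr do rewrite card_level -sum1_count.
rewrite (exchange_big_dep predT) //=; apply: eq_bigr => x _.
by rewrite sum1_count count_ltn_iota; apply/minn_idPl/geq_minl.
Qed.

Variable x0 : G.
Hypotheses (x0_terms : x0 \in terms a) (mu_x0 : mu l a x0 = l).

Lemma level_x0 k : (k < l)%N -> x0 \in level k.
Proof. by rewrite mem_level x0_terms mu_x0. Qed.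

Lemma admissible_levels : admissible a l (levels_from 0).
Proof.
split; first by rewrite size_map size_rev size_iota subn0.
  move=> B /mapP[k]; rewrite mem_rev mem_iota add0n subn0 => /andP[_ kl] ->.
  by apply/fset0Pn; exists x0; exact: level_x0.
exact: mult_levels.
Qed.

Hypothesis sigma_tight :
  size (sigma_set l a) = ((\sum_(x <- terms a) mu l a x) - l + 1)%N.

Lemma card_sigma_levels :
  (size (sigma_set l a) + l = \sum_(B <- levels_from 0) #|` B| + 1)%N.
Proof.
have mu_ge : (l <= \sum_(x <- terms a) mu l a x)%N.
  by rewrite (big_rem x0 x0_terms) /= mu_x0 leq_addr.
by rewrite sum_card_levels sigma_tight; lia.
Qed.

Hypothesis sigma_small : pG_gt G (size (sigma_set l a)).

Lemma prog_level0 : (2 <= l)%N -> (1 < #|` level 1|)%N ->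
  (l = 2%N -> pG_gt G (size (sigma_set l a)).+1) -> is_prog (level 0).
Proof.
move=> l2 A1 hS2; have l0 : (0 < l)%N by lia.
have A0 : (1 < #|` level 0|)%N by apply: leq_trans A1 (fsubset_leq_card (level_sub 0)).
have E2 : levels_from 0 = levels_from 2 ++ [:: level 1; level 0].
  by rewrite (levels_fromS l0) (levels_fromS l2) -catA.
have adm := admissible_levels; have sizeS := card_sigma_levels.
rewrite E2 in adm sizeS.
have [A1_2|A1_3] := leqP #|` level 1| 2.
  by apply: prog_of_tight_family_pair adm sigma_small sizeS _; lia.
have [/hS2 hS|l_ne2] := eqVneq l 2%N; first exact: prog_of_tight_family adm hS sizeS A1 A0.
have l3 : (2 < l)%N by lia.
rewrite (levels_fromS l3) -catA in adm sizeS.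
have [sub12|/fsubsetPn[r r1 r2]] := boolP (level 1 `<=` level 2).
  have A2 : (1 < #|` level 2|)%N by apply: leq_trans A1 (fsubset_leq_card sub12).
  exact: prog_of_tight_family_slack adm sigma_small sizeS A2 A1 A0.
(* Here mu r = 2: moving r from level 1 to level 2 keeps the family admissible, and level 2
   then has the two elements r and x0. *)
apply: (prog_of_tight_family_slack (admissible_move r1 r2 A1 adm) sigma_small) => //.
- by rewrite sum_card_move.
- by rewrite cardfsU1 r2 add1n ltnS cardfs_gt0; apply/fset0Pn; exists x0; apply: level_x0.
- by move: A1_3; rewrite (cardfsD1 r) r1; lia.
Qed.

End Levels.

Theorem theorem6p8 (G : zmodType) (l m : nat) (a : 'I_m -> G) :
  (2 <= l)%N -> (l <= m)%N ->
  (* |Sigma^l(a)| < p(G) - 1 if l = 2, < p(G) if l >= 3, where p(G) is the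
     least order of a nontrivial subgroup (infinite if none): this is
     expressed as a bound against every finite nontrivial subgroup *)
  (forall H : seq G, finite_nontrivial_subgroup H ->
     (size (sigma_set l a) < (if l == 2%N then (size H).-1 else size H))%N) ->
  (exists2 x, x \in terms a & mu l a x = l) ->
  (2 <= count (fun x => 2 <= mu l a x)%N (terms a))%N ->
  size (sigma_set l a) = ((\sum_(x <- terms a) mu l a x) - l + 1)%N ->
  is_AP (terms a).
Proof.
(* l <= m is implied by mu l a x0 = l. *)
move=> l2 _ hsigma [x0 x0A mux0] two_mu2 sizeS.
have hS : pG_gt G (size (sigma_set l a)) by move=> H /hsigma; case: (l == 2%N); lia.
have hS2 : l = 2%N -> pG_gt G (size (sigma_set l a)).+1.
  by move=> l_2 H /hsigma; rewrite l_2 eqxx; lia.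
have A1 : (1 < #|` level l a 1|)%N by rewrite card_level.
have l0 : (0 < l)%N by lia.
apply: is_AP_prog; rewrite -(level0E a l0).
exact: prog_level0 x0A mux0 sizeS hS l2 A1 hS2.
Qed.
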